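(* Let $S\subseteq\mathbb{N}^k$. If $S$ is denoted by some resimple expression, then $S$ is a recognizable subset of $\mathbb{N}^k$.
   Context: $\mathbb{N}$ includes $0$; $\mathbf{e}_j$ is the $j$-th unit vector of $\mathbb{N}^k$. For finite $B\subseteq\mathbb{N}^k$, $B^\oplus$ is the set of $\mathbb{N}$-linear combinations of elements of $B$, and $\gamma+B^\oplus=\{\gamma+\sigma:\sigma\in B^\oplus\}$. $B$ is a free basis if every element of $B^\oplus$ has a unique representation as an $\mathbb{N}$-linear combination of elements of $B$. An element is primary if it equals $n\mathbf{e}_j$ with $n>0$. An atomic resimple expression is $\gamma+B^\oplus$ with $\gamma\in\mathbb{N}^k$ and $B$ a free basis all of whose elements are primary. Resimple expressions are built inductively: atomic resimple expressions are resimple, and if $E,F$ are resimple then so are $E\cup F$, $E\cap F$ and $E^c$ (complement in $\mathbb{N}^k$), with the obvious set semantics. With $A=\{a_1,\dots,a_k\}$ and $\varphi:A^*\to\mathbb{N}^k$, $\varphi(w)=(|w|_{a_1},\dots,|w|_{a_k})$ ($|w|_a$ = number of occurrences of $a$ in $w$), a set $S\subseteq\mathbb{N}^k$ is recognizable if $\varphi^{-1}(S)$ is a regular language. *)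

From mathcomp Require Import all_boot.
Set Implicit Arguments. Unset Strict Implicit. Unset Printing Implicit Defensive.

Definition vec (k : nat) := {ffun 'I_k -> nat}.

Definition unitv k (j : 'I_k) : vec k := [ffun i => if i == j then 1 else 0].

Definition scalev k (n : nat) (v : vec k) : vec k := [ffun i => n * v i].

(* A finite subset B of N^k is represented by a duplicate-free list.
   N-linear combination of the elements of B with coefficients c. *)
Definition lincomb k (B : seq (vec k)) (c : vec k -> nat) : vec k :=
  [ffun i => \sum_(b <- B) c b * b i].

Definition span k (B : seq (vec k)) (x : vec k) : Prop :=
  exists c : vec k -> nat, x = lincomb B c.

Definition lin_set k (g : vec k) (B : seq (vec k)) (x : vec k) : Prop :=
  exists2 s, span B s & x = [ffun i => g i + s i].

Definition free_basis k (B : seq (vec k)) : Prop :=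
  uniq B /\
  forall c c' : vec k -> nat, lincomb B c = lincomb B c' ->
    forall b, b \in B -> c b = c' b.

Definition primary k (v : vec k) : Prop :=
  exists (n : nat) (j : 'I_k), 0 < n /\ v = scalev n (unitv j).

Inductive rexp (k : nat) : Type :=
| RAtom of vec k & seq (vec k)
| RUnion of rexp k & rexp k
| RInter of rexp k & rexp k
| RCompl of rexp k.

Fixpoint denote k (e : rexp k) : vec k -> Prop :=
  match e with
  | RAtom g B => lin_set g B
  | RUnion e1 e2 => fun x => denote e1 x \/ denote e2 x
  | RInter e1 e2 => fun x => denote e1 x /\ denote e2 x
  | RCompl e1 => fun x => ~ denote e1 x
  end.

Fixpoint resimple k (e : rexp k) : Prop :=
  match e with
  | RAtom g B => free_basis B /\ (forall b, b \in B -> primary b)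
  | RUnion e1 e2 => resimple e1 /\ resimple e2
  | RInter e1 e2 => resimple e1 /\ resimple e2
  | RCompl e1 => resimple e1
  end.

(* Alphabet A = {a_1,...,a_k} is 'I_k; phi = Parikh map *)
Definition parikh k (w : seq 'I_k) : vec k := [ffun i => count_mem i w].

Definition regular k (L : seq 'I_k -> Prop) : Prop :=
  exists (Q : finType) (q0 : Q) (delta : Q -> 'I_k -> Q) (F : pred Q),
    forall w, F (foldl delta q0 w) <-> L w.

Definition recognizable k (S : vec k -> Prop) : Prop :=
  regular (fun w : seq 'I_k => S (parikh w)).

(* A resimple set is saturated by the congruence on N^k that compares every
   coordinate up to a threshold T and modulo a period p: for an atom this
   holds because a free basis of primary vectors has at most one element
   supported on each axis, so the atom is a product of one-dimensional
   arithmetic progressions g_i + N_i N; saturation survives Boolean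
   operations after refining T and p.  A saturated set is recognized by the
   finite automaton that tracks, for each letter, its number of occurrences
   capped at T together with its residue modulo p. *)
From mathcomp Require Import all_boot zify.
From Stdlib Require Import ClassicalEpsilon.
Set Implicit Arguments. Unset Strict Implicit.

Lemma parikh_rcons k (w : seq 'I_k) a j :
  parikh (rcons w a) j = parikh w j + (j == a).
Proof. by rewrite !ffunE -cats1 count_cat /= addn0 eq_sym. Qed.

Section ParikhSignature.
Variables (k : nat) (S : vec k -> Prop) (Q : finType).
Variables (sig : vec k -> Q) (step : Q -> 'I_k -> Q).
Hypothesis sig_rcons : forall w a, sig (parikh (rcons w a)) = step (sig (parikh w)) a.
Hypothesis S_sig : forall x y, sig x = sig y -> S x -> S y.

Lemma foldl_step_sig u w : foldl step (sig (parikh u)) w = sig (parikh (u ++ w)).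
Proof.
elim: w u => [|a w IHw] u /=; first by rewrite cats0.
by rewrite -sig_rcons IHw cat_rcons.
Qed.

Lemma recognizable_parikh_signature : recognizable S.
Proof.
pose accept q := if excluded_middle_informative (exists w, sig (parikh w) = q /\ S (parikh w))
                 then true else false.
exists Q, (sig (parikh [::])), step, accept => w.
rewrite foldl_step_sig /accept.
case: excluded_middle_informative => [[w' [sig_w' Sw']]|no_w]; split => // Sw.
- exact: S_sig sig_w' Sw'.
- by case: no_w; exists w.
Qed.

End ParikhSignature.

Definition capmod_equiv k T p (x y : vec k) :=
  forall j, minn (x j) T = minn (y j) T /\ x j = y j %[mod p].

Definition capmod_invariant k T p (S : vec k -> Prop) :=
  forall x y, capmod_equiv T p x y -> S x -> S y.

Definition ultimately_periodic k (S : vec k -> Prop) :=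
  exists T p, 0 < p /\ capmod_invariant T p S.

Lemma capmod_equiv_sym k T p (x y : vec k) : capmod_equiv T p x y -> capmod_equiv T p y x.
Proof. by move=> xy j; have [] := xy j. Qed.

Lemma capmod_invariant_refine k T p T' p' (S : vec k -> Prop) :
  T <= T' -> p %| p' -> capmod_invariant T p S -> capmod_invariant T' p' S.
Proof.
move=> le_TT' dvd_pp' S_inv x y xy; apply: S_inv => j.
have [eq_min eq_mod] := xy j; split; first lia.
by rewrite -(modn_dvdm (x j) dvd_pp') eq_mod modn_dvdm.
Qed.

Section ThresholdModSignature.
Variables (k T p : nat).
Hypothesis p_gt0 : 0 < p.

Definition cap_ord (n : nat) : 'I_T.+1 := @Ordinal T.+1 (minn n T) (geq_minr n T).
Definition mod_ord (n : nat) : 'I_p := Ordinal (ltn_pmod n p_gt0).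

Definition capmod_sig (x : vec k) : {ffun 'I_k -> 'I_T.+1 * 'I_p} :=
  [ffun j => (cap_ord (x j), mod_ord (x j))].

Definition capmod_step (q : {ffun 'I_k -> 'I_T.+1 * 'I_p}) (a : 'I_k) :=
  [ffun j => if j == a then (cap_ord (q j).1.+1, mod_ord (q j).2.+1) else q j].

Lemma capmod_sig_rcons w a :
  capmod_sig (parikh (rcons w a)) = capmod_step (capmod_sig (parikh w)) a.
Proof.
apply/ffunP => j; rewrite [LHS]ffunE parikh_rcons !ffunE.
case: eqP => _; last by rewrite addn0.
by congr (_, _); apply: val_inj => /=; [lia | rewrite -[(_ %% p).+1]addn1 modnDml].
Qed.

Lemma capmod_sig_eq x y : capmod_sig x = capmod_sig y -> capmod_equiv T p x y.
Proof.
by move=> /ffunP sig_xy j; move: (sig_xy j); rewrite !ffunE; case.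
Qed.

Lemma recognizable_capmod_invariant (S : vec k -> Prop) :
  capmod_invariant T p S -> recognizable S.
Proof.
move=> S_inv; apply: (recognizable_parikh_signature capmod_sig_rcons) => x y /capmod_sig_eq.
exact: S_inv.
Qed.

End ThresholdModSignature.

Lemma recognizable_ultimately_periodic k (S : vec k -> Prop) :
  ultimately_periodic S -> recognizable S.
Proof. by case=> T [p [p_gt0 S_inv]]; apply: recognizable_capmod_invariant S_inv. Qed.

Lemma ultimately_periodic_common k (S1 S2 : vec k -> Prop) :
  ultimately_periodic S1 -> ultimately_periodic S2 ->
  exists T p, [/\ 0 < p, capmod_invariant T p S1 & capmod_invariant T p S2].
Proof.
move=> [T1 [p1 [p1_gt0 S1_inv]]] [T2 [p2 [p2_gt0 S2_inv]]].
exists (maxn T1 T2), (p1 * p2); split; first by rewrite muln_gt0 p1_gt0.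
- exact: capmod_invariant_refine (leq_maxl _ _) (dvdn_mulr _ (dvdnn _)) S1_inv.
- exact: capmod_invariant_refine (leq_maxr _ _) (dvdn_mull _ (dvdnn _)) S2_inv.
Qed.

Lemma ultimately_periodicU k (S1 S2 : vec k -> Prop) :
  ultimately_periodic S1 -> ultimately_periodic S2 ->
  ultimately_periodic (fun x => S1 x \/ S2 x).
Proof.
move=> /ultimately_periodic_common P1 /P1 [T [p [p_gt0 S1_inv S2_inv]]].
exists T, p; split => // x y xy [/(S1_inv _ _ xy) | /(S2_inv _ _ xy)]; by [left | right].
Qed.

Lemma ultimately_periodicI k (S1 S2 : vec k -> Prop) :
  ultimately_periodic S1 -> ultimately_periodic S2 ->
  ultimately_periodic (fun x => S1 x /\ S2 x).
Proof.
move=> /ultimately_periodic_common P1 /P1 [T [p [p_gt0 S1_inv S2_inv]]].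
by exists T, p; split => // x y xy [/(S1_inv _ _ xy) ? /(S2_inv _ _ xy)].
Qed.

Lemma ultimately_periodicC k (S : vec k -> Prop) :
  ultimately_periodic S -> ultimately_periodic (fun x => ~ S x).
Proof.
move=> [T [p [p_gt0 S_inv]]]; exists T, p; split => // x y xy nSx Sy.
exact/nSx/(S_inv _ _ (capmod_equiv_sym xy)).
Qed.

Lemma progressionP (g N n : nat) :
  (exists m, n = g + m * N) <-> g <= n /\ n = g %[mod N].
Proof.
split=> [[m ->] | [le_gn eq_mod]]; first by rewrite leq_addr addnC modnMDl.
have /dvdnP [m dvd_N] : N %| n - g by rewrite -eqn_mod_dvd // eq_mod.
by exists m; rewrite -dvd_N subnKC.
Qed.

Lemma progression_capmod_invariant (g N T p x y : nat) :
  g < T -> (0 < N -> N %| p) -> minn x T = minn y T -> x = y %[mod p] ->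
  (exists m, x = g + m * N) -> exists m, y = g + m * N.
Proof.
move=> lt_gT dvd_Np eq_min eq_mod /progressionP [le_gx x_mod]; apply/progressionP.
split; first by clear -lt_gT eq_min le_gx; lia.
case: (posnP N) => [N0 | /dvd_Np dvd_Np'].
  by move: x_mod; rewrite N0 !modn0 => x_g; clear -lt_gT eq_min x_g; lia.
by rewrite -(modn_dvdm y dvd_Np') -eq_mod modn_dvdm.
Qed.

Lemma primary_support k (b : vec k) i j : primary b -> b i != 0 -> b j != 0 -> i = j.
Proof.
case=> n [l [_ ->]]; rewrite !ffunE.
by case: (i =P l) => [-> | _]; case: (j =P l) => [-> | _]; rewrite ?muln0.
Qed.

Lemma lincomb_delta k (B : seq (vec k)) b0 n : uniq B -> b0 \in B ->
  lincomb B (fun b => if b == b0 then n else 0) = scalev n b0.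
Proof.
move=> uB b0B; apply/ffunP => i; rewrite !ffunE (bigD1_seq b0) //= eqxx.
by rewrite big1_seq ?addn0 // => b /andP [/negbTE ->].
Qed.

Section FreePrimaryAtom.
Variables (k : nat) (g : vec k) (B : seq (vec k)).
Hypothesis B_free : free_basis B.
Hypothesis B_primary : forall b, b \in B -> primary b.

(* Without freeness, B could contain both e_i and 2 e_i. *)
Lemma free_primary_support_uniq b1 b2 i :
  b1 \in B -> b2 \in B -> b1 i != 0 -> b2 i != 0 -> b1 = b2.
Proof.
move=> b1B b2B b1i b2i; have [uB coef_uniq] := B_free.
have [n1 [j1 [n1_gt0 def_b1]]] := B_primary b1B.
have [n2 [j2 [n2_gt0 def_b2]]] := B_primary b2B.
have def_j1 : i = j1.
  by apply: primary_support (B_primary b1B) b1i _; rewrite def_b1 !ffunE eqxx; lia.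
have def_j2 : i = j2.
  by apply: primary_support (B_primary b2B) b2i _; rewrite def_b2 !ffunE eqxx; lia.
subst j1 j2.
have same_comb : lincomb B (fun b => if b == b1 then n2 else 0)
               = lincomb B (fun b => if b == b2 then n1 else 0).
  rewrite !lincomb_delta // def_b1 def_b2; apply/ffunP => t; rewrite !ffunE; lia.
have := coef_uniq _ _ same_comb b1 b1B; rewrite eqxx.
by case: eqP => // _; lia.
Qed.

Definition axis_weight (i : 'I_k) := \sum_(b <- B) b i.

Definition axis_owner (i : 'I_k) : vec k := head [ffun=> 0] [seq b : vec k <- B | b i != 0].

Lemma axis_owner_spec i : axis_weight i != 0 -> axis_owner i \in B /\ axis_owner i i != 0.
Proof.
rewrite sum_nat_seq_neq0 => /hasP [b bB /= bi].
have : axis_owner i \in [seq b : vec k <- B | b i != 0].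
  rewrite /axis_owner; case def_s: filter => [|b' s] /=; last exact: mem_head.
  by move: (mem_filter (fun b : vec k => b i != 0) b B); rewrite def_s bi bB.
by rewrite mem_filter => /andP [].
Qed.

Lemma lincomb_axis c i : lincomb B c i = c (axis_owner i) * axis_weight i.
Proof.
rewrite ffunE /axis_weight big_distrr /=; apply: eq_big_seq => b bB.
have [-> | bi] := eqVneq (b i) 0; first by rewrite !muln0.
have /axis_owner_spec [ownerB owner_i] : axis_weight i != 0.
  by rewrite sum_nat_seq_neq0; apply/hasP; exists b.
by rewrite (free_primary_support_uniq bB ownerB bi owner_i).
Qed.

Lemma lin_setP x : lin_set g B x <-> forall i, exists m, x i = g i + m * axis_weight i.
Proof.
split=> [[s [c ->] ->] i | x_prog].
  by exists (c (axis_owner i)); rewrite ffunE lincomb_axis.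
have [m def_x] := fin_all_exists x_prog.
pose c (b : vec k) := if [pick j | b j != 0] is Some j then m j else 0.
exists (lincomb B c); first by exists c.
apply/ffunP => i; rewrite ffunE def_x lincomb_axis; congr (_ + _).
have [-> | /axis_owner_spec [ownerB owner_i]] := eqVneq (axis_weight i) 0.
  by rewrite !muln0.
rewrite /c; case: pickP => [j owner_j | /(_ i)]; last by rewrite owner_i.
by rewrite (primary_support (B_primary ownerB) owner_j owner_i).
Qed.

Lemma ultimately_periodic_lin_set : ultimately_periodic (lin_set g B).
Proof.
exists (\max_i g i).+1, (\prod_i maxn (axis_weight i) 1).
split=> [|x y xy]; first by rewrite prodn_gt0 // => i; rewrite leq_max orbT.
rewrite !lin_setP => x_prog i; have [eq_min eq_mod] := xy i.
apply: progression_capmod_invariant eq_min eq_mod (x_prog i).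
  by rewrite ltnS leq_bigmax.
by move=> /maxn_idPl weight_i; rewrite (bigD1 i) //= weight_i dvdn_mulr.
Qed.

End FreePrimaryAtom.

Lemma ultimately_periodic_resimple k (e : rexp k) :
  resimple e -> ultimately_periodic (denote e).
Proof.
elim: e => [g B | e1 IH1 e2 IH2 | e1 IH1 e2 IH2 | e1 IH1] /=.
- by case; apply: ultimately_periodic_lin_set.
- by case=> /IH1 P1 /IH2 P2; apply: ultimately_periodicU.
- by case=> /IH1 P1 /IH2 P2; apply: ultimately_periodicI.
- by move=> /IH1; apply: ultimately_periodicC.
Qed.

Theorem mainTheorem6 (k : nat) (S : vec k -> Prop) :
  (exists e : rexp k, resimple e /\ (forall x, denote e x <-> S x)) ->
  recognizable S.
Proof.
case=> e [e_resimple denote_e]; apply: recognizable_ultimately_periodic.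
have [T [p [p_gt0 e_inv]]] := ultimately_periodic_resimple e_resimple.
by exists T, p; split=> // x y xy /denote_e /(e_inv _ _ xy) /denote_e.
Qed.
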